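(* Let $P$ be a finite set of points in the plane in general position with $|P|$ even, and suppose $P=A\sqcup B$ where each of $A$ and $B$ is a union of vertex sets of connected components of the underlying graph of $P$. Then every halving line of $P$ passing through two points of $A$ has exactly $|B|/2$ points of $B$ strictly on each side, and symmetrically every halving line of $P$ passing through two points of $B$ has exactly $|A|/2$ points of $A$ strictly on each side.
   Context: Points are in general position if no three are collinear. For a finite set $P$ of $n$ points in general position with $n$ even, a halving line of $P$ is a line through two points of $P$ that has exactly $(n-2)/2$ points of $P$ strictly on each side. The underlying graph of $P$ has vertex set $P$, and two points are adjacent if and only if the line through them is a halving line of $P$. *)

From HB Require Import structures.
From mathcomp Require Import all_boot all_order all_algebra.
Set Implicit Arguments. Unset Strict Implicit. Unset Printing Implicit Defensive.
Import Order.TTheory GRing.Theory Num.Theory.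
Local Open Scope ring_scope.

Section Geom.
Variable R : realFieldType.
Definition point := (R * R)%type.

(* orientation determinant: > 0 iff r is strictly to the left of the
   directed line p -> q, < 0 iff strictly to the right, 0 iff collinear *)
Definition orient (p q r : point) : R :=
  (q.1 - p.1) * (r.2 - p.2) - (q.2 - p.2) * (r.1 - p.1).

Definition nleft (S : seq point) (p q : point) : nat :=
  count (fun r => 0 < orient p q r) S.
Definition nright (S : seq point) (p q : point) : nat :=
  count (fun r => orient p q r < 0) S.

Definition general_position (P : seq point) : Prop :=
  uniq P /\
  forall p q r, p \in P -> q \in P -> r \in P ->
    p != q -> q != r -> p != r -> orient p q r != 0.

Definition halving_line (P : seq point) (p q : point) : bool :=
  [&& p \in P, q \in P, p != q,
      nleft P p q == ((size P - 2) %/ 2)%N &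
      nright P p q == ((size P - 2) %/ 2)%N].

Definition adjacent (P : seq point) : rel point := fun p q => halving_line P p q.

Definition reachable (P : seq point) (x y : point) : Prop :=
  x \in P /\ exists s : seq point, path (adjacent P) x s /\ last x s = y.

Definition union_of_components (P A : seq point) : Prop :=
  {subset A <= P} /\ forall x y, x \in A -> reachable P x y -> y \in A.
End Geom.

From HB Require Import structures.
From mathcomp Require Import all_boot all_order all_algebra.
From mathcomp Require Import ring lra zify.
Import Order.TTheory GRing.Theory Num.Theory.
Local Open Scope ring_scope.

(* Write |P| = 2k+2 and let B be a union of components of the
   underlying graph, so that B is closed under adjacency.  For a height
   function on the plane, an upper half of P is a set of k+1 points of P none
   of which is lower than a point of P outside it.  The key invariant is that
   all upper halves, for all directions of the height, contain the same number
   of points of B.  Moving the direction linearly from N0 to N0 + D, an upper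
   half can only change at a parameter where two points x, y of P have equal
   heights; by general position exactly x and y are then exchanged, exactly k
   points lie on each side of the line xy, so xy is a halving line and x, y
   are both in B or both outside B.  An induction on the number of such tie
   parameters, bisecting between two of them, gives the invariant.
   For a halving line a1 a2 with a1, a2 outside B, the left side plus a1 and
   the right side plus a2 are upper halves for the two normals of the line;
   comparing both with an upper half for the direction of the line shows that
   B has as many points on the left as on the right, and none on the line. *)

Section Counting.
Context {T : eqType}.
Implicit Types (a b c : pred T) (s : seq T).

Lemma count_split a b c s :
  {in s, forall z, a z = b z || c z} -> {in s, forall z, ~~ (b z && c z)} ->
  count a s = (count b s + count c s)%N.
Proof.
elim: s => [|z s IH] //= Habc Hbc.
rewrite IH; last first.
- by move=> w ws; apply: Hbc; rewrite inE ws orbT.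
- by move=> w ws; apply: Habc; rewrite inE ws orbT.
rewrite Habc ?mem_head //; have := Hbc z (mem_head _ _).
by case: (b z); case: (c z) => //= _; lia.
Qed.

Lemma count_lt_sub a b s z :
  {in s, forall w, a w -> b w} -> z \in s -> b z -> ~~ a z ->
  (count a s < count b s)%N.
Proof.
move=> Hab zs bz naz.
rewrite (@count_split b a (predI b (predC a)) s) => [|w ws|w _] /=.
- have : (0 < count (predI b (predC a)) s)%N.
    by rewrite -has_count; apply/hasP; exists z => //=; rewrite bz naz.
  lia.
- by case aw: (a w); rewrite ?(Hab _ ws aw) ?andbT.
- by case: (a w); rewrite ?andbF.
Qed.

Lemma count_eq_mismatch a b s :
  count a s = count b s -> has (fun z => a z != b z) s ->
  exists2 x, x \in s & a x && ~~ b x.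
Proof.
move=> Hc /hasP[w ws Hw].
case: (boolP (has (fun z => a z && ~~ b z) s)) => [/hasP[x xs Hx]|Hn].
  by exists x.
have Hab : {in s, forall z, a z -> b z}.
  by move=> z zs az; have := hasPn Hn z zs; rewrite /= az negbK.
have [bw naw] : b w /\ ~~ a w.
  by move: Hw (Hab w ws); case: (a w); case: (b w) => // _ /(_ isT).
by have := count_lt_sub _ _ _ _ Hab ws bw naw; rewrite Hc ltnn.
Qed.

Lemma count_ge2 a s : uniq s -> (1 < count a s)%N ->
  exists x y, [/\ x \in s, y \in s, a x, a y & x != y].
Proof.
move=> us; rewrite -size_filter.
have : uniq (filter a s) by apply: filter_uniq.
have : {subset filter a s <= [predI a & mem s]} by move=> z; rewrite mem_filter.
case: (filter a s) => [|x [|y rest]] //= Hsub /andP[+ _] _.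
rewrite inE negb_or => /andP[xy _].
have /andP[ax xs] := Hsub x (mem_head _ _).
have /andP[ay ys] : a y && (y \in s) by apply: Hsub; rewrite !inE eqxx orbT.
by exists x, y.
Qed.
End Counting.

Section Geometry.
Context {R : realFieldType}.
Implicit Types (p q r x y N : point R).

Definition dot (v p : point R) : R := v.1 * p.1 + v.2 * p.2.
Definition det2 (v w : point R) : R := v.1 * w.2 - v.2 * w.1.

Definition dir x y : point R := (y.1 - x.1, y.2 - x.2).
Definition nrm x y : point R := (- (y.2 - x.2), y.1 - x.1).

Lemma orient_dot x y r : orient x y r = dot (nrm x y) r - dot (nrm x y) x.
Proof. by rewrite /orient /dot /=; ring. Qed.

Lemma orient_swap x y r : orient y x r = - orient x y r.
Proof. by rewrite /orient; ring. Qed.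

Lemma sqlen_neq0 x y : x != y -> (y.1 - x.1) ^+ 2 + (y.2 - x.2) ^+ 2 != 0.
Proof.
case: x y => [x1 x2] [y1 y2]; rewrite xpair_eqE negb_and /= => Hxy.
rewrite paddr_eq0 ?sqr_ge0 // !sqrf_eq0 !subr_eq0 negb_and.
by rewrite [y1 == _]eq_sym [y2 == _]eq_sym.
Qed.

(* Rotating the normal of xy to the direction of xy and on to the normal
   of yx proceeds through independent directions. *)
Lemma det2_nrm_dir x y : x != y ->
  det2 (nrm x y) (dir x y) != 0 /\ det2 (dir x y) (nrm y x) != 0.
Proof.
move/sqlen_neq0 => H.
have -> : det2 (nrm x y) (dir x y) = - ((y.1 - x.1) ^+ 2 + (y.2 - x.2) ^+ 2).
  by rewrite /det2 /=; ring.
have -> : det2 (dir x y) (nrm y x) = - ((y.1 - x.1) ^+ 2 + (y.2 - x.2) ^+ 2).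
  by rewrite /det2 /=; ring.
by rewrite oppr_eq0.
Qed.

Lemma det2_dot_inj N0 D p q : det2 N0 D != 0 ->
  dot N0 p = dot N0 q -> dot D p = dot D q -> p = q.
Proof.
case: N0 D p q => [a1 a2] [d1 d2] [p1 p2] [q1 q2]; rewrite /det2 /dot /= => Hd h1 h2.
have E1 : (a1 * d2 - a2 * d1) * (p1 - q1) = 0.
  have -> : (a1 * d2 - a2 * d1) * (p1 - q1) = d2 * (a1 * p1 + a2 * p2 - (a1 * q1 + a2 * q2))
      - a2 * (d1 * p1 + d2 * p2 - (d1 * q1 + d2 * q2)) by ring.
  by rewrite h1 h2 !subrr !mulr0 subrr.
have E2 : (a1 * d2 - a2 * d1) * (p2 - q2) = 0.
  have -> : (a1 * d2 - a2 * d1) * (p2 - q2) = a1 * (d1 * p1 + d2 * p2 - (d1 * q1 + d2 * q2))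
      - d1 * (a1 * p1 + a2 * p2 - (a1 * q1 + a2 * q2)) by ring.
  by rewrite h1 h2 !subrr !mulr0 subrr.
move/eqP: E1; rewrite mulf_eq0 (negbTE Hd) /= subr_eq0 => /eqP ->.
by move/eqP: E2; rewrite mulf_eq0 (negbTE Hd) /= subr_eq0 => /eqP ->.
Qed.

Lemma orient_level_line N x y : x != y -> (N.1 != 0) || (N.2 != 0) ->
  dot N x = dot N y ->
  exists2 l, l != 0 & forall r, orient x y r = l * (dot N r - dot N x).
Proof.
move=> /sqlen_neq0 Hs HN; rewrite /dot => Hxy.
set d1 := y.1 - x.1 in Hs *; set d2 := y.2 - x.2 in Hs *.
set s := d1 ^+ 2 + d2 ^+ 2 in Hs *; set m := N.2 * d1 - N.1 * d2.
have hN : N.1 * d1 + N.2 * d2 = 0 by rewrite /d1 /d2; lra.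
have mN : m != 0.
  apply/eqP => m0; move: HN.
  have -> : N.1 = 0.
    apply: (mulIf Hs); rewrite mul0r.
    have -> : N.1 * s = d1 * (N.1 * d1 + N.2 * d2) - d2 * m by rewrite /s /m; ring.
    by rewrite hN m0; ring.
  have -> : N.2 = 0.
    apply: (mulIf Hs); rewrite mul0r.
    have -> : N.2 * s = d2 * (N.1 * d1 + N.2 * d2) + d1 * m by rewrite /s /m; ring.
    by rewrite hN m0; ring.
  by rewrite eqxx.
exists (s / m) => [|r]; first by rewrite mulf_neq0 ?invr_eq0.
apply: (mulfI mN); rewrite mulrA mulrCA divff // mulr1.
have -> : m * orient x y r = s * (N.1 * r.1 + N.2 * r.2 - (N.1 * x.1 + N.2 * x.2))
          - (N.1 * d1 + N.2 * d2) * (d1 * (r.1 - x.1) + d2 * (r.2 - x.2)).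
  by rewrite /orient /m /s /d1 /d2; ring.
by rewrite hN mul0r subr0.
Qed.

Lemma affine_root (a b s s' : R) : s <= s' -> 0 <= a + s * b -> a + s' * b <= 0 ->
  exists t, [/\ s <= t, t <= s' & a + t * b = 0].
Proof.
move=> ss' h0 h1.
case: (eqVneq (a + s * b) 0) => [e|ne]; first by exists s.
have hp : 0 < a + s * b by rewrite lt_def ne h0.
case: (eqVneq b 0) => [b0|bnz]; first by move: hp h1; rewrite b0 !mulr0; lra.
have bn : b < 0 by nra.
exists (- a / b); have tb : (- a / b) * b = - a by field.
split; [nra | nra | lra].
Qed.

Lemma nleft_swap (S : seq (point R)) x y : nleft S y x = nright S x y.
Proof. by apply: eq_count => r; rewrite /= orient_swap oppr_gt0. Qed.

Lemma nright_swap (S : seq (point R)) x y : nright S y x = nleft S x y.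
Proof. by apply: eq_count => r; rewrite /= orient_swap oppr_lt0. Qed.

Lemma halving_sym (P : seq (point R)) x y :
  halving_line P x y -> halving_line P y x.
Proof.
rewrite /halving_line (nleft_swap P x y) (nright_swap P x y) eq_sym.
by case/and5P=> -> -> -> -> ->.
Qed.
End Geometry.

Section UpperHalves.
Variable R : realFieldType.
Variables (P B : seq (point R)) (k : nat).
Hypothesis HGP : general_position P.
Hypothesis Hsize : size P = (2 * k + 2)%N.
Hypothesis HBP : {subset B <= P}.
Hypothesis HBu : uniq B.
Hypothesis Hcomp : {in P &, forall x y, halving_line P x y -> (x \in B) = (y \in B)}.

Lemma uniqP : uniq P. Proof. by case: HGP. Qed.

Definition upper_half (h : point R -> R) (S : pred (point R)) :=
  count S P = k.+1 /\
  forall p q, p \in P -> q \in P -> S p -> ~~ S q -> h q <= h p.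

Lemma upper_half_shift h h' (c : R) S : (forall p, h' p = h p + c) ->
  upper_half h S -> upper_half h' S.
Proof.
move=> E [cS hS]; split=> // p q pP qP Sp Sq.
by rewrite !E lerD2r; apply: hS.
Qed.

(* Every height function has an upper half: the first k+1 points of P
   sorted by decreasing height. *)
Lemma upper_half_exists h : exists S, upper_half h S.
Proof.
pose le := fun p q : point R => h q <= h p.
have tot : total le by move=> p q; rewrite /le le_total.
have tr : transitive le by move=> p q r /= h1 h2; rewrite /le; exact: le_trans h2 h1.
pose st := sort le P; pose t := take k.+1 st; pose d := drop k.+1 st.
have hp : perm_eq st P by rewrite /st perm_sort perm_refl.
have ust : uniq st by rewrite (perm_uniq hp) uniqP.
have std : st = t ++ d by rewrite cat_take_drop.
exists (mem t); split.
  rewrite -(permP hp) std count_cat.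
  have -> : count (mem t) t = size t by rewrite -count_predT; apply: eq_in_count.
  have -> : count (mem t) d = 0%N.
    move: ust; rewrite std cat_uniq => /and3P[_ nh _].
    by apply/eqP; rewrite -leqn0 leqNgt -has_count.
  by rewrite addn0 size_takel // (perm_size hp) Hsize; lia.
move=> p q pP qP pt qt.
have qd : q \in d.
  by move: qP; rewrite -(perm_mem hp) std mem_cat; case/orP => // qt'; case/negP: qt.
have := sort_sorted tot P; rewrite -/st (sorted_pairwise tr) std pairwise_cat.
by case/and3P => /allrelP H _ _; exact: H.
Qed.

Definition height (N0 D : point R) (t : R) (p : point R) : R := dot N0 p + t * dot D p.

Lemma height_sub N0 D t x y : height N0 D t x - height N0 D t y =
  (dot N0 x - dot N0 y) + t * (dot D x - dot D y).
Proof. by rewrite /height; ring. Qed.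

Section OneTie.
Variables (N0 D : point R) (t0 t1 c : R) (S0 S1 : pred (point R)).
Hypothesis Hdet : det2 N0 D != 0.
Hypothesis Ht : t0 <= t1.
Hypothesis Honly : forall p q t, p \in P -> q \in P -> p != q -> t0 <= t -> t <= t1 ->
  height N0 D t p = height N0 D t q -> t = c.
Hypothesis G0 : upper_half (height N0 D t0) S0.
Hypothesis G1 : upper_half (height N0 D t1) S1.

Local Notation hg := (height N0 D).

Lemma tie_at_c {x y} a b : t0 <= a -> b <= t1 -> a <= b ->
  x \in P -> y \in P -> x != y -> hg b x <= hg b y -> hg a y <= hg a x ->
  [/\ a <= c, c <= b & hg c x = hg c y].
Proof.
move=> ha hb ab xP yP xy h1 h0.
have [t [ht0 ht1 ht]] : exists t, [/\ a <= t, t <= b &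
    (dot N0 x - dot N0 y) + t * (dot D x - dot D y) = 0].
  by apply: affine_root => //; rewrite -height_sub; lra.
have st : hg t x = hg t y by apply/eqP; rewrite -subr_eq0 height_sub ht.
by rewrite -(Honly x y t xP yP xy (le_trans ha ht0) (le_trans ht1 hb) st).
Qed.

Lemma order_preserved {z r} : z \in P -> r \in P -> t0 <= c -> c <= t1 ->
  hg c z < hg c r -> hg t0 z < hg t0 r /\ hg t1 z < hg t1 r.
Proof.
move=> zP rP hc0 hc1 hlt.
have zr : z != r by apply: contraTneq hlt => ->; rewrite ltxx.
have rz : r != z by rewrite eq_sym.
split; rewrite ltNge; apply/negP => hle.
- have [_ _ e] := tie_at_c t0 c (lexx _) hc1 hc0 zP rP zr (ltW hlt) hle.
  by move: hlt; rewrite e ltxx.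
- have [_ _ e] := tie_at_c c t1 hc0 (lexx _) hc1 rP zP rz hle (ltW hlt).
  by move: hlt; rewrite e ltxx.
Qed.

Section Swap.
Variables x y : point R.
Hypotheses (xP : x \in P) (yP : y \in P).
Hypotheses (S0x : S0 x) (nS1x : ~~ S1 x) (S1y : S1 y) (nS0y : ~~ S0 y).

Lemma swap_neq : x != y.
Proof. by apply: contraNneq nS0y => <-. Qed.

Lemma swap_tie : [/\ t0 <= c, c <= t1 & hg c x = hg c y].
Proof.
case: G0 => _ o0; case: G1 => _ o1.
exact: tie_at_c t0 t1 (lexx _) (lexx _) Ht xP yP swap_neq
  (o1 y x yP xP S1y nS1x) (o0 x y xP yP S0x nS0y).
Qed.

Let above r := hg c x < hg c r.
Let below r := hg c r < hg c x.

(* A point above the tie stays above x before c and above y after c, so it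
   lies in both upper halves; dually a point below the tie lies in neither. *)
Lemma above_in_both {r} : r \in P -> above r -> S0 r && S1 r.
Proof.
move=> rP Ur; have [hc0 hc1 hxy] := swap_tie.
case: G0 => _ o0; case: G1 => _ o1.
apply/andP; split; apply/negPn/negP => nSr.
- have [h _] := order_preserved xP rP hc0 hc1 Ur.
  by have := o0 x r xP rP S0x nSr; rewrite leNgt h.
- have Ur' : hg c y < hg c r by rewrite -hxy.
  have [_ h] := order_preserved yP rP hc0 hc1 Ur'.
  by have := o1 y r yP rP S1y nSr; rewrite leNgt h.
Qed.

Lemma below_in_neither {r} : r \in P -> below r -> ~~ S0 r && ~~ S1 r.
Proof.
move=> rP Dr; have [hc0 hc1 hxy] := swap_tie.
case: G0 => _ o0; case: G1 => _ o1.
apply/andP; split; apply/negP => Sr.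
- have Dr' : hg c r < hg c y by rewrite -hxy.
  have [h _] := order_preserved rP yP hc0 hc1 Dr'.
  by have := o0 r y rP yP Sr nS0y; rewrite leNgt h.
- have [_ h] := order_preserved rP xP hc0 hc1 Dr.
  by have := o1 r x rP xP Sr nS1x; rewrite leNgt h.
Qed.

Lemma swap_orient :
  exists2 l, l != 0 & forall r, orient x y r = l * (hg c r - hg c x).
Proof.
have [_ _ hxy] := swap_tie.
pose Nc : point R := (N0.1 + c * D.1, N0.2 + c * D.2).
have hNc p : hg c p = dot Nc p by rewrite /height /dot /=; ring.
have Ncnz : (Nc.1 != 0) || (Nc.2 != 0).
  rewrite -negb_and; apply: contra Hdet => /andP[/eqP h1 /eqP h2].
  have -> : det2 N0 D = det2 Nc D by rewrite /det2 /=; ring.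
  by rewrite /det2 h1 h2 !mul0r subrr.
have hNxy : dot Nc x = dot Nc y by rewrite -!hNc.
have [l lnz Hl] := orient_level_line Nc x y swap_neq Ncnz hNxy.
by exists l => // r; rewrite !hNc.
Qed.

Lemma level_is_pair {r} : r \in P -> ~~ above r -> ~~ below r -> (r == x) || (r == y).
Proof.
move=> rP; rewrite /above /below -!leNgt => h1 h2.
have e : hg c r = hg c x by apply/eqP; rewrite eq_le h1 h2.
apply/negPn/negP => /norP[rx ry]; have [_ Hg] := HGP; have [l _ Hl] := swap_orient.
rewrite eq_sym in rx; rewrite eq_sym in ry.
have := Hg x y r xP yP rP swap_neq ry rx.
by rewrite Hl e subrr mulr0 eqxx.
Qed.

Lemma S0_split r : r \in P -> S0 r = above r || (r == x).
Proof.
move=> rP; case Ur: (above r); first by case/andP: (above_in_both rP Ur).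
case Dr: (below r).
  case/andP: (below_in_neither rP Dr) => /negbTE -> _.
  by apply/esym/negbTE; apply: contraTneq Dr => ->; rewrite /below ltxx.
case/orP: (level_is_pair rP (negbT Ur) (negbT Dr)) => /eqP ->; first by rewrite S0x eqxx.
by rewrite (negbTE nS0y) eq_sym (negbTE swap_neq).
Qed.

Lemma S1_split r : r \in P -> S1 r = above r || (r == y).
Proof.
move=> rP; case Ur: (above r); first by case/andP: (above_in_both rP Ur).
case Dr: (below r).
  case/andP: (below_in_neither rP Dr) => _ /negbTE ->.
  have [_ _ hxy] := swap_tie.
  by apply/esym/negbTE; apply: contraTneq Dr => ->; rewrite /below hxy ltxx.
case/orP: (level_is_pair rP (negbT Ur) (negbT Dr)) => /eqP ->; last by rewrite S1y eqxx.
by rewrite (negbTE nS1x) (negbTE swap_neq).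
Qed.

Lemma above_neq {r} : above r -> (r != x) && (r != y).
Proof.
have [_ _ hxy] := swap_tie.
by rewrite /above => Ur; apply/andP; split; apply: contraTneq Ur => ->; rewrite ?hxy ltxx.
Qed.

Lemma count_above : count above P = k.
Proof.
case: G0 => cS0 _; move: cS0.
rewrite (count_split _ above (pred1 x) P S0_split); last first.
  by move=> z _; apply/negP => /andP[/above_neq/andP[zx _] /= /eqP ez]; rewrite ez eqxx in zx.
by rewrite count_uniq_mem ?uniqP // xP addn1 => -[].
Qed.

Lemma count_below : count below P = k.
Proof.
have Cabove : {in P, forall r, predC above r = below r || ((r == x) || (r == y))}.
  move=> r rP /=; case Ur: (above r); last first.
    by case Dr: (below r) => //=; rewrite level_is_pair ?Ur ?Dr.
  case/andP: (above_neq Ur) => /negbTE -> /negbTE ->.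
  by rewrite /below !orbF; apply/esym/negbTE; rewrite -leNgt ltW.
have Cxy : {in P, forall r, ~~ (below r && ((r == x) || (r == y)))}.
  move=> r _; apply/negP => /andP[Dr /orP[] /eqP er]; move: Dr; rewrite er /below ?ltxx //.
  by have [_ _ ->] := swap_tie; rewrite ltxx.
have xy : {in P, forall r, ~~ ((r == x) && (r == y))}.
  by move=> r _; apply/negP => /andP[/eqP -> /eqP exy]; move: swap_neq; rewrite exy eqxx.
have := count_predC above P.
rewrite (count_split _ _ _ _ Cabove Cxy).
rewrite (count_split _ (pred1 x) (pred1 y) _ (fun _ _ => erefl) xy).
rewrite !count_uniq_mem ?uniqP // xP yP count_above Hsize => /eqP.
by rewrite mul2n -addnn -addnA eqn_add2l eqn_add2r => /eqP.
Qed.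

Lemma swap_halving : halving_line P x y.
Proof.
have [l lnz Hl] := swap_orient.
rewrite /halving_line xP yP swap_neq /nleft /nright /=.
have -> : ((size P - 2) %/ 2 = k)%N by rewrite Hsize addnK mulKn.
case/lt_total/orP: lnz => [ln|lp].
- rewrite (@eq_count _ (fun r => 0 < orient x y r) below) => [|r]; last first.
    by rewrite /= Hl nmulr_rgt0 // subr_lt0.
  rewrite (@eq_count _ (fun r => orient x y r < 0) above) => [|r]; last first.
    by rewrite /= Hl nmulr_rlt0 // subr_gt0.
  by rewrite count_below count_above eqxx.
- rewrite (@eq_count _ (fun r => 0 < orient x y r) above) => [|r]; last first.
    by rewrite /= Hl pmulr_rgt0 // subr_gt0.
  rewrite (@eq_count _ (fun r => orient x y r < 0) below) => [|r]; last first.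
    by rewrite /= Hl pmulr_rlt0 // subr_lt0.
  by rewrite count_below count_above eqxx.
Qed.

Lemma swap_count : count S0 B = count S1 B.
Proof.
have nx r : ~~ (above r && (r == x)).
  by case Ar: (above r) => //; case/andP: (above_neq Ar) => /negbTE ->.
have ny r : ~~ (above r && (r == y)).
  by case Ar: (above r) => //; case/andP: (above_neq Ar) => _ /negbTE ->.
rewrite (count_split _ above (pred1 x) B (fun r rB => S0_split r (HBP r rB)) (fun r _ => nx r)).
rewrite (count_split _ above (pred1 y) B (fun r rB => S1_split r (HBP r rB)) (fun r _ => ny r)).
by rewrite !count_uniq_mem // (Hcomp x y xP yP swap_halving).
Qed.
End Swap.

Lemma one_tie_count : count S0 B = count S1 B.
Proof.
case: G0 => c0 _; case: G1 => c1 _.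
case: (boolP (has (fun z => S0 z != S1 z) P)) => Hh; last first.
  by apply: eq_in_count => b /HBP bP; have := hasPn Hh b bP; rewrite negbK => /eqP.
have [x xP /andP[S0x nS1x]] := count_eq_mismatch _ _ _ (etrans c0 (esym c1)) Hh.
have Hh' : has (fun z => S1 z != S0 z) P.
  by apply/hasP; exists x => //; rewrite S0x (negbTE nS1x).
have [y yP /andP[S1y nS0y]] := count_eq_mismatch _ _ _ (etrans c1 (esym c0)) Hh'.
exact: (swap_count x y xP yP S0x nS1x S1y nS0y).
Qed.
End OneTie.

Definition tie_param (N0 D p q : point R) : R :=
  (dot N0 q - dot N0 p) / (dot D p - dot D q).
Definition ties (N0 D : point R) : seq R :=
  undup [seq tie_param N0 D p q | p <- P, q <- P].

Definition nties (N0 D : point R) (t0 t1 : R) : nat :=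
  count (fun t => (t0 <= t) && (t <= t1)) (ties N0 D).

Lemma tie_in_ties N0 D p q t : det2 N0 D != 0 -> p \in P -> q \in P -> p != q ->
  height N0 D t p = height N0 D t q -> t \in ties N0 D.
Proof.
move=> Hd pP qP pq st.
have hD : dot D p - dot D q != 0.
  rewrite subr_eq0; apply: contra pq => /eqP e.
  have e0 : dot N0 p = dot N0 q by move: st; rewrite /height e; lra.
  by rewrite (det2_dot_inj N0 D p q Hd e0 e).
rewrite mem_undup; apply/allpairsP; exists (p, q); split => //=.
have h : t * (dot D p - dot D q) = dot N0 q - dot N0 p by move: st; rewrite /height; lra.
by rewrite /tie_param -h; field.
Qed.

Lemma count_invariant_few_ties N0 D t0 t1 S0 S1 : det2 N0 D != 0 -> t0 <= t1 ->
  (nties N0 D t0 t1 <= 1)%N ->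
  upper_half (height N0 D t0) S0 -> upper_half (height N0 D t1) S1 ->
  count S0 B = count S1 B.
Proof.
move=> Hd Ht; rewrite /nties -size_filter.
set F := filter _ (ties N0 D) => HF G0 G1.
apply: (one_tie_count N0 D t0 t1 (head t0 F) S0 S1 Hd Ht _ G0 G1).
move=> p q t pP qP pq h0 h1 st.
have : t \in F by rewrite mem_filter h0 h1 (tie_in_ties N0 D p q t Hd pP qP pq st).
by case: F HF => [|c' [|c'' F']] //= _; rewrite inE => /eqP.
Qed.

Lemma nties_sub N0 D t0 t1 t0' t1' b : t0 <= t0' -> t1' <= t1 ->
  b \in ties N0 D -> t0 <= b <= t1 -> ~~ (t0' <= b <= t1') ->
  (nties N0 D t0' t1' < nties N0 D t0 t1)%N.
Proof.
move=> h0 h1 bT bI bI'; apply: (count_lt_sub _ _ _ b) => // t _ /andP[ht0 ht1].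
by rewrite (le_trans h0 ht0) (le_trans ht1 h1).
Qed.

(* The same holds for every interval, by induction on the number of tie
   parameters: an interval with two of them is bisected between them. *)
Lemma count_invariant_interval N0 D m : det2 N0 D != 0 ->
  forall t0 t1 S0 S1, (nties N0 D t0 t1 <= m)%N -> t0 <= t1 ->
  upper_half (height N0 D t0) S0 -> upper_half (height N0 D t1) S1 ->
  count S0 B = count S1 B.
Proof.
move=> Hd; elim: m => [|m IH] t0 t1 S0 S1 Hm Ht G0 G1.
  exact: (count_invariant_few_ties N0 D t0 t1 S0 S1 Hd Ht (leq_trans Hm (leq0n 1)) G0 G1).
case: (leqP (nties N0 D t0 t1) 1) => H1.
  exact: (count_invariant_few_ties N0 D t0 t1 S0 S1 Hd Ht H1 G0 G1).
have [a [b [aT bT aI bI ab]]] : exists a b, [/\ a \in ties N0 D, b \in ties N0 D,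
    t0 <= a <= t1, t0 <= b <= t1 & a < b].
  have [c [c' [cT c'T cI c'I]]] := count_ge2 _ _ (undup_uniq _) H1.
  by case/lt_total/orP => cc'; [exists c, c' | exists c', c].
move: aI bI => /andP[ha0 ha1] /andP[hb0 hb1].
pose md := (a + b) / 2.
have am : a < md by rewrite /md; lra.
have mb : md < b by rewrite /md; lra.
have [Sm Gm] := upper_half_exists (height N0 D md).
have t0m : t0 <= md by apply: le_trans ha0 (ltW am).
have mt1 : md <= t1 by apply: le_trans (ltW mb) hb1.
have h1 : (nties N0 D t0 md < nties N0 D t0 t1)%N.
  apply: (nties_sub _ _ _ _ _ _ b) => //; first by rewrite hb0.
  by rewrite negb_and -!ltNge mb orbT.
have h2 : (nties N0 D md t1 < nties N0 D t0 t1)%N.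
  apply: (nties_sub _ _ _ _ _ _ a) => //; first by rewrite ha0.
  by rewrite negb_and -!ltNge am.
rewrite (IH t0 md S0 Sm _ t0m G0 Gm) ?(IH md t1 Sm S1 _ mt1 Gm G1) //.
- by rewrite -ltnS (leq_trans h2 Hm).
- by rewrite -ltnS (leq_trans h1 Hm).
Qed.

Lemma upper_half_count_invariant v0 v1 S0 S1 : det2 v0 v1 != 0 ->
  upper_half (dot v0) S0 -> upper_half (dot v1) S1 -> count S0 B = count S1 B.
Proof.
pose D : point R := (v1.1 - v0.1, v1.2 - v0.2).
have -> : det2 v0 v1 = det2 v0 D by rewrite /det2 /=; ring.
move=> Hd G0 G1; apply: (count_invariant_interval v0 D _ Hd 0 1 S0 S1 (leqnn _) ler01).
- by apply: (upper_half_shift _ _ 0 _ _ G0) => p; rewrite /height /dot /=; ring.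
- by apply: (upper_half_shift _ _ 0 _ _ G1) => p; rewrite /height /dot /=; ring.
Qed.

Lemma left_upper_half x y : halving_line P x y ->
  upper_half (orient x y) (fun r => (0 < orient x y r) || (r == x)).
Proof.
case/and5P => xP _ _ /eqP hl _.
have oxx : orient x y x = 0 by rewrite /orient; ring.
split.
  rewrite (count_split _ (fun r => 0 < orient x y r) (pred1 x)) // => [|r _].
    by rewrite count_uniq_mem ?uniqP // xP -/(nleft P x y) hl Hsize addnK mulKn // addn1.
  by apply/negP => /andP[+ /eqP er]; rewrite er oxx ltxx.
move=> p q _ _ /orP[hp|/eqP ->]; rewrite negb_or -leNgt => /andP[hq _].
- exact: le_trans hq (ltW hp).
- by rewrite oxx.
Qed.

Lemma nleft_add_nright S x y : {subset S <= P} -> x \in P -> y \in P -> x != y ->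
  x \notin S -> y \notin S -> (nleft S x y + nright S x y)%N = size S.
Proof.
move=> SP xP yP xy xS yS; have [_ Hg] := HGP.
rewrite -count_predT (count_split _ (fun r => 0 < orient x y r) (fun r => orient x y r < 0) S) //.
- move=> r rS; have : orient x y r != 0.
    apply: Hg => //; first exact: SP.
    + by apply/eqP => yr; rewrite yr rS in yS.
    + by apply/eqP => xr; rewrite xr rS in xS.
  by rewrite neq_lt orbC => ->.
- by move=> r _; apply/negP => /andP[/lt_trans h /h]; rewrite ltxx.
Qed.

Lemma halving_balanced a1 a2 : a1 \notin B -> a2 \notin B -> halving_line P a1 a2 ->
  (2 * nleft B a1 a2 = size B)%N /\ (2 * nright B a1 a2 = size B)%N.
Proof.
move=> a1B a2B h; have /and5P[a1P a2P a12 _ _] := h.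
have [Hd1 Hd2] := det2_nrm_dir a1 a2 a12.
have nrm_shift (x y p : point R) : dot (nrm x y) p = orient x y p + dot (nrm x y) x.
  by rewrite orient_dot subrK.
have Gl := upper_half_shift _ _ _ _ (nrm_shift a1 a2) (left_upper_half a1 a2 h).
have Gr := upper_half_shift _ _ _ _ (nrm_shift a2 a1)
  (left_upper_half a2 a1 (halving_sym P a1 a2 h)).
have [Sm Gm] := upper_half_exists (dot (dir a1 a2)).
have := upper_half_count_invariant _ _ _ _ Hd1 Gl Gm.
have := upper_half_count_invariant _ _ _ _ Hd2 Gm Gr.
have side_count (x y : point R) : x \notin B ->
    count (fun r => (0 < orient x y r) || (r == x)) B = nleft B x y.
  move=> xB; apply: eq_in_count => r rB /=.
  by rewrite (_ : (r == x) = false) ?orbF //; apply: contraNF xB => /eqP <-.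
rewrite (side_count a1 a2 a1B) (side_count a2 a1 a2B) nleft_swap => er el.
have := nleft_add_nright B a1 a2 HBP a1P a2P a12 a1B a2B.
by rewrite -(etrans el er) => <-; rewrite mul2n addnn.
Qed.
End UpperHalves.

Lemma union_of_components_adj {R : realFieldType} (P B : seq (point R)) :
  union_of_components P B ->
  {in P &, forall x y, halving_line P x y -> (x \in B) = (y \in B)}.
Proof.
case=> _ HB x y xP yP hxy.
have adj_reach u v : u \in P -> halving_line P u v -> reachable P u v.
  by move=> uP huv; split => //; exists [:: v]; rewrite /= andbT.
apply/idP/idP => [xB|yB]; first exact: HB x y xB (adj_reach x y xP hxy).
exact: HB y x yB (adj_reach y x yP (halving_sym P x y hxy)).
Qed.

Lemma halving_size {R : realFieldType} (P : seq (point R)) x y :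
  ~~ odd (size P) -> halving_line P x y -> exists k, size P = (2 * k + 2)%N.
Proof.
move=> Hev /and3P[xP yP /andP[xy _]].
have s2 : (2 <= size P)%N.
  apply: (@uniq_leq_size _ [:: x; y]); first by rewrite /= inE xy.
  by move=> z; rewrite !inE => /orP[]/eqP->.
exists ((size P)./2 - 1)%N.
have := odd_double_half (size P); rewrite (negbTE Hev) add0n -mul2n.
by move: s2; move: (size P)./2 (size P) => h n; lia.
Qed.

Theorem mainTheorem3 (R : realFieldType) (P A B : seq (point R)) :
  general_position P ->
  ~~ odd (size P) ->
  perm_eq P (A ++ B) ->
  union_of_components P A ->
  union_of_components P B ->
  (forall a1 a2, a1 \in A -> a2 \in A -> halving_line P a1 a2 ->
     (2 * nleft B a1 a2 = size B)%N /\ (2 * nright B a1 a2 = size B)%N) /\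
  (forall b1 b2, b1 \in B -> b2 \in B -> halving_line P b1 b2 ->
     (2 * nleft A b1 b2 = size A)%N /\ (2 * nright A b1 b2 = size A)%N).
Proof.
move=> HGP Hev Hperm HA HB.
have : uniq (A ++ B) by rewrite -(perm_uniq Hperm); case: HGP.
rewrite cat_uniq => /and3P[uA /hasPn BnA uB].
have AnB z : z \in A -> z \notin B by move=> zA; exact: contraL (BnA z) zA.
split=> [a1 a2 a1A a2A | b1 b2 b1B b2B] h; have [k Hk] := halving_size P _ _ Hev h.
- exact: halving_balanced R P B k HGP Hk HB.1 uB (union_of_components_adj P B HB)
    a1 a2 (AnB a1 a1A) (AnB a2 a2A) h.
- exact: halving_balanced R P A k HGP Hk HA.1 uA (union_of_components_adj P A HA)
    b1 b2 (BnA b1 b1B) (BnA b2 b2B) h.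
Qed.
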